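(* The category $\mathfrak{B}$ whose objects are Bochvar algebras and whose morphisms are homomorphisms of Bochvar algebras is equivalent to the category $\mathfrak{S}$ whose objects are Bochvar systems and whose morphisms are the Bochvar-system morphisms defined below. The equivalence is given by the functors $\Gamma:\mathfrak{B}\to\mathfrak{S}$ and $\Xi:\mathfrak{S}\to\mathfrak{B}$ described below.
   Context: Let $\mathbf{WK}^e$ be the three-element algebra on $\{0,\tfrac12,1\}$ of type $\langle \wedge,\vee,\neg,J_2,0,1\rangle$ (arities $2,2,1,1,0,0$). Its operations are: - $\neg$ swaps $0$ and $1$ and fixes $\tfrac12$; - $\wedge,\vee$ agree with the two-element Boolean operations on $\{0,1\}$ and return $\tfrac12$ whenever an argument is $\tfrac12$; - $J_2(1)=1$ and $J_2(\tfrac12)=J_2(0)=0$. A Bochvar algebra is a member of the quasivariety $ISP(\mathbf{WK}^e)$. Płonka sums. A semilattice direct system consists of: - a join-semilattice $\langle I,\vee,i_0\rangle$ with least element $i_0$; - pairwise disjoint similar algebras $\mathbf{A}_i$ ($i\in I$), called fibres; - homomorphisms $p_{ij}:\mathbf{A}_i\to\mathbf{A}_j$ for $i\le j$, with $p_{ii}=\mathrm{id}$ and $p_{jk}\circ p_{ij}=p_{ik}$. Its Płonka sum has universe $\bigsqcup_i A_i$. Operations are $g(a_1,\dots,a_n)=g^{\mathbf{A}_k}(p_{i_1k}(a_1),\dots,p_{i_nk}(a_n))$ for $a_m\in A_{i_m}$ and $k=i_1\vee\dots\vee i_n$; constants are taken from $\mathbf{A}_{i_0}$. Every Bochvar algebra's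 $\{\wedge,\vee,\neg,0,1\}$-reduct is canonically (up to isomorphism) a Płonka sum of Boolean algebras, with bottom fibre $\mathbf{A}_{i_0}$. Two elements $a,b$ lie in the same fibre iff $a\wedge(a\vee b)=a$ and $b\wedge(b\vee a)=b$. A Bochvar system is a pair $\langle\mathbf{B},\mathbf{I}\rangle$ where $\mathbf{B}$ is a Boolean algebra and $I\subseteq B$ contains $1$ and is closed under $\wedge$. A morphism $\langle\mathbf{B}_1,\mathbf{I}_1\rangle\to\langle\mathbf{B}_2,\mathbf{I}_2\rangle$ is a Boolean homomorphism $g:\mathbf{B}_1\to\mathbf{B}_2$ with $g(I_1)\subseteq I_2$. The functor $\Gamma$: - On a Bochvar algebra $\mathbf{A}$ with fibres $\mathbf{A}_i$, set $\Gamma(\mathbf{A})=\langle\mathbf{A}_{i_0},K\rangle$ with $K=\{J_2(1^{A_i}):i\in I\}$, where $1^{A_i}$ is the top of fibre $\mathbf{A}_i$. - On a homomorphism $f$, $\Gamma(f)$ is the restriction of $f$ to the bottom fibre. The functor $\Xi$. For a Bochvar system $\langle\mathbf{B},\mathbf{I}\rangle$, write $[i)$ for the principal filter of $\mathbf{B}$ generated by $i$, and $\mathbf{B}/[i)$ for the quotient by the congruence associated to $[i)$. - $\Xi(\langle\mathbf{B},\mathbf{I}\rangle)$ is the unique Bochvar algebra whose involutive-bisemilattice reduct is the Płonka sum of the following system: index semilattice $I$ with the order dual to that of $\mathbf{B}$ (so $1$ is least); fibres $\mathbf{B}/[i)$; maps $p_{ij}(a/[i))=a/[j)$. Its $J_2$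 sends $a/[i)$ to the unique element of the bottom fibre $\mathbf{B}/[1)\cong\mathbf{B}$ lying in $[0,i]$ and congruent to $a$ modulo $[i)$. - On a morphism $g$, $\Xi(g)(a/[i))=g(a)/[g(i))$. *)

From Stdlib Require Import FunctionalExtensionality Setoid.
Set Implicit Arguments.

Inductive three : Type := t0 | th | t1.   (* 0, 1/2, 1 *)

Definition meet3 (x y : three) : three :=
  match x, y with
  | th, _ => th
  | _, th => th
  | t1, t1 => t1
  | _, _ => t0
  end.

Definition join3 (x y : three) : three :=
  match x, y with
  | th, _ => th
  | _, th => th
  | t0, t0 => t0
  | _, _ => t1
  end.

Definition neg3 (x : three) : three :=
  match x with t0 => t1 | th => th | t1 => t0 end.

Definition J2_3 (x : three) : three :=
  match x with t1 => t1 | _ => t0 end.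

Record bsig : Type := BSig {
  bcar :> Type;
  bmeet : bcar -> bcar -> bcar;
  bjoin : bcar -> bcar -> bcar;
  bneg  : bcar -> bcar;
  bJ2   : bcar -> bcar;
  bzero : bcar;
  bone  : bcar }.

Arguments bmeet {b}. Arguments bjoin {b}. Arguments bneg {b}.
Arguments bJ2 {b}. Arguments bzero {b}. Arguments bone {b}.

Definition WKe : bsig := @BSig three meet3 join3 neg3 J2_3 t0 t1.

Definition WKpow (X : Type) : bsig :=
  @BSig (X -> WKe)
    (fun a b x => @bmeet WKe (a x) (b x))
    (fun a b x => @bjoin WKe (a x) (b x))
    (fun a x => @bneg WKe (a x))
    (fun a x => @bJ2 WKe (a x))
    (fun _ => @bzero WKe)
    (fun _ => @bone WKe).

Definition bhom (A B : bsig) (f : A -> B) : Prop :=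
  (forall a b, f (bmeet a b) = bmeet (f a) (f b)) /\
  (forall a b, f (bjoin a b) = bjoin (f a) (f b)) /\
  (forall a, f (bneg a) = bneg (f a)) /\
  (forall a, f (bJ2 a) = bJ2 (f a)) /\
  f bzero = bzero /\
  f bone = bone.
Arguments bhom {A B} f.

(* Bochvar algebra: member of ISP(WK^e), i.e. isomorphic to a subalgebra
   of a direct power of WK^e: there is an injective homomorphism into a
   power of WK^e. *)
Definition is_bochvar (A : bsig) : Prop :=
  exists (X : Type) (h : A -> WKpow X),
    (forall a b, h a = h b -> a = b) /\ bhom h.

(* Płonka fibres: a and b lie in the same fibre. *)
Definition same_fibre (A : bsig) (a b : A) : Prop :=
  bmeet a (bjoin a b) = a /\ bmeet b (bjoin b a) = b.

Arguments same_fibre {A} a b.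

Definition in_bottom (A : bsig) (a : A) : Prop := same_fibre a bzero.
Arguments in_bottom {A} a.

(* c is the top element 1^{A_i} of its fibre A_i (w.r.t. the Boolean
   order of that fibre: b <= c iff b /\ c = b). *)
Definition fibre_top (A : bsig) (c : A) : Prop :=
  forall b : A, same_fibre b c -> bmeet b c = b.
Arguments fibre_top {A} c.

Record balg : Type := BAlg {
  acar :> Type;
  ameet : acar -> acar -> acar;
  ajoin : acar -> acar -> acar;
  acompl : acar -> acar;
  azero : acar;
  aone : acar }.

Arguments ameet {b}. Arguments ajoin {b}. Arguments acompl {b}.
Arguments azero {b}. Arguments aone {b}.

Record is_boolean (B : balg) : Prop := {
  ba_meetA : forall a b c : B, ameet a (ameet b c) = ameet (ameet a b) c;
  ba_joinA : forall a b c : B, ajoin a (ajoin b c) = ajoin (ajoin a b) c;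
  ba_meetC : forall a b : B, ameet a b = ameet b a;
  ba_joinC : forall a b : B, ajoin a b = ajoin b a;
  ba_meetK : forall a b : B, ameet a (ajoin a b) = a;
  ba_joinK : forall a b : B, ajoin a (ameet a b) = a;
  ba_distr : forall a b c : B, ameet a (ajoin b c) = ajoin (ameet a b) (ameet a c);
  ba_meet1 : forall a : B, ameet a aone = a;
  ba_join0 : forall a : B, ajoin a azero = a;
  ba_complM : forall a : B, ameet a (acompl a) = azero;
  ba_complJ : forall a : B, ajoin a (acompl a) = aone }.

Definition bool_hom (B1 B2 : balg) (g : B1 -> B2) : Prop :=
  (forall a b, g (ameet a b) = ameet (g a) (g b)) /\
  (forall a b, g (ajoin a b) = ajoin (g a) (g b)) /\
  (forall a, g (acompl a) = acompl (g a)) /\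
  g azero = azero /\
  g aone = aone.
Arguments bool_hom {B1 B2} g.

Record bsys : Type := BSys { sB :> balg; sI : sB -> Prop }.

Record is_system (S : bsys) : Prop := {
  sys_bool : is_boolean S;
  sys_I1 : sI S aone;
  sys_Imeet : forall i j, sI S i -> sI S j -> sI S (ameet i j) }.

Definition sys_hom (S1 S2 : bsys) (g : S1 -> S2) : Prop :=
  bool_hom g /\ (forall i, sI S1 i -> sI S2 (g i)).
Arguments sys_hom {S1 S2} g.

Section Emb.
Variables (A : bsig) (X : Type) (h : A -> WKpow X).
Hypothesis hinj : forall a b, h a = h b -> a = b.
Hypothesis hh : bhom h.

Lemma emb_bottom (a : A) : in_bottom a <-> forall x, h a x <> th.
Proof.
destruct hh as (Hm & Hj & Hn & HJ & H0 & H1).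
unfold in_bottom, same_fibre; split.
- intros [_ E] x Hx. apply (f_equal h) in E.
  rewrite Hm, Hj, H0 in E. apply (f_equal (fun f => f x)) in E.
  simpl in E. rewrite Hx in E. discriminate.
- intros Hx; split; apply hinj; rewrite Hm, Hj, ?H0;
  apply functional_extensionality; intro x; simpl;
  generalize (Hx x); destruct (h a x); simpl; congruence.
Qed.

Lemma emb_meet (a b : A) : in_bottom a -> in_bottom b -> in_bottom (bmeet a b).
Proof.
destruct hh as (Hm & _).
intros Ha0 Hb0; apply emb_bottom;
  pose proof (proj1 (emb_bottom a) Ha0) as Ha; pose proof (proj1 (emb_bottom b) Hb0) as Hb.
intro x; rewrite Hm; simpl; generalize (Ha x) (Hb x).
destruct (h a x), (h b x); simpl; congruence.
Qed.

Lemma emb_join (a b : A) : in_bottom a -> in_bottom b -> in_bottom (bjoin a b).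
Proof.
destruct hh as (_ & Hj & _).
intros Ha0 Hb0; apply emb_bottom;
  pose proof (proj1 (emb_bottom a) Ha0) as Ha; pose proof (proj1 (emb_bottom b) Hb0) as Hb.
intro x; rewrite Hj; simpl; generalize (Ha x) (Hb x).
destruct (h a x), (h b x); simpl; congruence.
Qed.

Lemma emb_neg (a : A) : in_bottom a -> in_bottom (bneg a).
Proof.
destruct hh as (_ & _ & Hn & _).
intros Ha0; apply emb_bottom; pose proof (proj1 (emb_bottom a) Ha0) as Ha.
intro x; rewrite Hn; simpl; generalize (Ha x).
destruct (h a x); simpl; congruence.
Qed.

Lemma emb_zero : in_bottom (bzero : A).
Proof.
destruct hh as (_ & _ & _ & _ & H0 & _).
apply emb_bottom; intro x; rewrite H0; simpl; congruence.
Qed.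

Lemma emb_one : in_bottom (bone : A).
Proof.
destruct hh as (_ & _ & _ & _ & _ & H1).
apply emb_bottom; intro x; rewrite H1; simpl; congruence.
Qed.
End Emb.

Section GammaObj.
Variables (A : bsig) (HA : is_bochvar A).

Lemma bot_meet (a b : A) : in_bottom a -> in_bottom b -> in_bottom (bmeet a b).
Proof. destruct HA as (X & h & hi & hh). apply (emb_meet hi hh). Qed.
Lemma bot_join (a b : A) : in_bottom a -> in_bottom b -> in_bottom (bjoin a b).
Proof. destruct HA as (X & h & hi & hh). apply (emb_join hi hh). Qed.
Lemma bot_neg (a : A) : in_bottom a -> in_bottom (bneg a).
Proof. destruct HA as (X & h & hi & hh). apply (emb_neg hi hh). Qed.
Lemma bot_zero : in_bottom (bzero : A).
Proof. destruct HA as (X & h & hi & hh). exact (emb_zero hi hh). Qed.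
Lemma bot_one : in_bottom (bone : A).
Proof. destruct HA as (X & h & hi & hh). exact (emb_one hi hh). Qed.
End GammaObj.

Definition Gcar (A : bsig) : Type := {a : A | in_bottom a}.

Definition Gamma (A : bsig) (HA : is_bochvar A) : bsys :=
  BSys
    (@BAlg (Gcar A)
       (fun a b => exist _ (bmeet (proj1_sig a) (proj1_sig b))
                      (bot_meet HA (proj2_sig a) (proj2_sig b)))
       (fun a b => exist _ (bjoin (proj1_sig a) (proj1_sig b))
                      (bot_join HA (proj2_sig a) (proj2_sig b)))
       (fun a => exist _ (bneg (proj1_sig a)) (bot_neg HA (proj2_sig a)))
       (exist _ bzero (bot_zero HA))
       (exist _ bone (bot_one HA)))
    (fun k => exists c : A, fibre_top c /\ proj1_sig k = bJ2 c).

Arguments Gamma : clear implicits.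

Lemma bhom_bottom (A A' : bsig) (f : A -> A') (Hf : bhom f) (a : A) :
  in_bottom a -> in_bottom (f a).
Proof.
destruct Hf as (Hm & Hj & _ & _ & H0 & _).
unfold in_bottom, same_fibre; intros [E1 E2].
rewrite <- H0, <- !Hj, <- !Hm, E1, E2; split; reflexivity.
Qed.

Definition GammaMor (A1 : bsig) (HA1 : is_bochvar A1)
  (A2 : bsig) (HA2 : is_bochvar A2) (f : A1 -> A2) (Hf : bhom f) :
  Gamma A1 HA1 -> Gamma A2 HA2 :=
  fun a => exist _ (f (proj1_sig a)) (bhom_bottom Hf (proj2_sig a)).

Arguments GammaMor {A1} HA1 {A2} HA2 {f} Hf.

(* An element a/[i) of the fibre B/[i) (i in I) is represented by the pair
   (i, a /\ i), the canonical representative of the class a/[i) lying in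
   [0, i]  (a == b mod [i)  iff  a /\ i = b /\ i). *)
Definition Xcar (S : bsys) : Type :=
  {p : S * S | sI S (fst p) /\ ameet (snd p) (fst p) = snd p}.

Lemma Xmk_ok (S : bsys) (HS : is_system S) (k : S) (Hk : sI S k) (x : S) :
  sI S (fst (k, ameet x k)) /\
  ameet (snd (k, ameet x k)) (fst (k, ameet x k)) = snd (k, ameet x k).
Proof.
simpl; split; [exact Hk|].
destruct (sys_bool HS) as [mA _ mC _ mK jK _ _ _ _ _].
rewrite <- mA.
assert (E : ameet k k = k).
{ rewrite <- (jK k k) at 2. rewrite mK. reflexivity. }
rewrite E; reflexivity.
Qed.

Arguments Xmk_ok : clear implicits.

Definition Xmk (S : bsys) (HS : is_system S) (k : S) (Hk : sI S k) (x : S) :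
  Xcar S := exist _ (k, ameet x k) (Xmk_ok S HS k Hk x).

Arguments Xmk {S} HS k Hk x.

Definition Xidx (S : bsys) (p : Xcar S) : S := fst (proj1_sig p).
Definition Xval (S : bsys) (p : Xcar S) : S := snd (proj1_sig p).
Arguments Xmk {S} HS k Hk x.

Definition XidxI (S : bsys) (p : Xcar S) : sI S (Xidx p) := proj1 (proj2_sig p).

(* Płonka sum over the index semilattice <I, /\ (dual order), 1>, fibres
   B/[i), transition maps a/[i) |-> a/[j); J2(a/[i)) = the element of
   B/[1) = B in [0,i] congruent to a mod [i). *)
Definition Xi (S : bsys) (HS : is_system S) : bsig :=
  @BSig (Xcar S)
    (fun p q => Xmk HS _ (sys_Imeet HS _ _ (XidxI p) (XidxI q))
                    (ameet (Xval p) (Xval q)))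
    (fun p q => Xmk HS _ (sys_Imeet HS _ _ (XidxI p) (XidxI q))
                    (ajoin (Xval p) (Xval q)))
    (fun p => Xmk HS _ (XidxI p) (acompl (Xval p)))
    (fun p => Xmk HS _ (sys_I1 HS) (ameet (Xval p) (Xidx p)))
    (Xmk HS _ (sys_I1 HS) azero)
    (Xmk HS _ (sys_I1 HS) aone).

Arguments Xi : clear implicits.

Definition XiMor (S1 : bsys) (HS1 : is_system S1)
  (S2 : bsys) (HS2 : is_system S2) (g : S1 -> S2) (Hg : sys_hom g) :
  Xi S1 HS1 -> Xi S2 HS2 :=
  fun p => Xmk HS2 _ (proj2 Hg _ (XidxI p)) (g (Xval p)).

Arguments XiMor {S1} HS1 {S2} HS2 {g} Hg.

(* A Bochvar algebra embeds into a power of WK^e, so its equations can be checked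
   coordinatewise in the three-element algebra; a Boolean algebra is separated by its
   two-valued homomorphisms (the ultrafilter theorem, from Zorn's lemma), so its
   equations can be checked in the two-element algebra.  These two reductions show that
   Gamma and Xi are well defined, the two-valued homomorphisms phi of B providing the
   embedding of Xi(B, I) into a power of WK^e (a/[i) goes to 1/2 if phi i = 0 and to
   phi a otherwise).  The unit sends a to J2(a)/[J2(a \/ ~a)) and is inverted by
   a/[k) |-> a /\ c for any fibre top c with J2 c = k; the counit reads off the bottom
   fibre B/[1), which is B itself. *)

From Stdlib Require Import Classical ClassicalEpsilon FunctionalExtensionality ProofIrrelevance.
From mathcomp Require classical_sets.
Set Implicit Arguments.

Definition ba_le (B : balg) (x y : B) : Prop := ameet x y = x.
Arguments ba_le {B} x y.

Definition two_valued (B : balg) (phi : B -> bool) : Prop :=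
  (forall a b, phi (ameet a b) = andb (phi a) (phi b)) /\
  (forall a b, phi (ajoin a b) = orb (phi a) (phi b)) /\
  (forall a, phi (acompl a) = negb (phi a)) /\
  phi azero = false /\ phi aone = true.
Arguments two_valued {B} phi.

Definition proper_filter (B : balg) (F : B -> Prop) : Prop :=
  F aone /\ (forall x y, F x -> F y -> F (ameet x y)) /\
  (forall x y, F x -> ba_le x y -> F y) /\ ~ F azero.
Arguments proper_filter {B} F.

Section BooleanAlgebra.
Variable B : balg.
Hypothesis HB : is_boolean B.

Let meetA := ba_meetA HB.
Let meetC := ba_meetC HB.
Let joinC := ba_joinC HB.
Let meetK := ba_meetK HB.
Let joinK := ba_joinK HB.
Let meet_joinr := ba_distr HB.
Let meetx1 := ba_meet1 HB.
Let joinx0 := ba_join0 HB.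
Let meet_compl := ba_complM HB.
Let join_compl := ba_complJ HB.

Lemma meetxx (a : B) : ameet a a = a.
Proof. rewrite <- (joinK a a) at 2. apply meetK. Qed.

Lemma meetx0 (a : B) : ameet a azero = azero.
Proof. rewrite <- (meet_compl a), meetA, meetxx. reflexivity. Qed.

Lemma le_meetl (a b : B) : ba_le (ameet a b) a.
Proof. unfold ba_le. rewrite <- meetA, (meetC b a), meetA, meetxx. reflexivity. Qed.

Lemma le_meetr (a b : B) : ba_le (ameet a b) b.
Proof. unfold ba_le. rewrite <- meetA, meetxx. reflexivity. Qed.

Lemma le_trans (x y z : B) : ba_le x y -> ba_le y z -> ba_le x z.
Proof. unfold ba_le; intros Hxy Hyz. rewrite <- Hxy, <- meetA, Hyz. reflexivity. Qed.

Lemma le_meet (x y z : B) : ba_le x y -> ba_le x z -> ba_le x (ameet y z).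
Proof. unfold ba_le; intros Hxy Hxz. rewrite meetA, Hxy, Hxz. reflexivity. Qed.

Lemma le_of_meet_compl (x y : B) : ameet x (acompl y) = azero -> ba_le x y.
Proof.
unfold ba_le; intro E.
rewrite <- (joinx0 (ameet x y)), <- E, <- meet_joinr, join_compl, meetx1. reflexivity.
Qed.

Lemma meet_join_compl_meet (a b : B) :
  ameet (ajoin a b) (ameet (acompl a) (acompl b)) = azero.
Proof.
rewrite meetC, meet_joinr.
assert (Ea : ameet (ameet (acompl a) (acompl b)) a = azero).
{ rewrite (meetC (acompl a)), <- meetA, (meetC (acompl a) a), meet_compl, meetx0. reflexivity. }
assert (Eb : ameet (ameet (acompl a) (acompl b)) b = azero).
{ rewrite <- meetA, (meetC (acompl b) b), meet_compl, meetx0. reflexivity. }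
rewrite Ea, Eb, joinx0. reflexivity.
Qed.

Lemma principal_proper_filter (c : B) : c <> azero -> proper_filter (ba_le c).
Proof.
intro Hc; split; [|split; [|split]].
- apply meetx1.
- intros x y; apply le_meet.
- intros x y; apply le_trans.
- unfold ba_le; rewrite meetx0; intro E; exact (Hc (eq_sym E)).
Qed.

Lemma proper_filter_extend_compl (F : B -> Prop) (a : B) : proper_filter F -> ~ F a ->
  proper_filter (fun x => exists2 f, F f & ba_le (ameet f (acompl a)) x).
Proof.
intros [F1 [Fmeet [Fup F0]]] Fa; split; [|split; [|split]].
- exists aone; [exact F1|]. apply le_meetl.
- intros x y [f Ff Hx] [g Fg Hy]. exists (ameet f g); [apply Fmeet; assumption|].
  apply le_meet.
  + apply le_trans with (ameet f (acompl a)); [|exact Hx].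
    apply le_meet; [apply le_trans with (ameet f g); apply le_meetl|apply le_meetr].
  + apply le_trans with (ameet g (acompl a)); [|exact Hy].
    apply le_meet; [|apply le_meetr].
    apply le_trans with (ameet f g); [apply le_meetl|apply le_meetr].
- intros x y [f Ff Hx] Hxy. exists f; [exact Ff|]. apply le_trans with x; assumption.
- intros [f Ff Hf]. apply Fa, (Fup f); [exact Ff|]. apply le_of_meet_compl.
  unfold ba_le in Hf; rewrite meetx0 in Hf; symmetry; exact Hf.
Qed.

Lemma chain_union_proper_filter (Fs : (B -> Prop) -> Prop) :
  (forall X Y, Fs X -> Fs Y -> (forall t, X t -> Y t) \/ (forall t, Y t -> X t)) ->
  (forall X t, Fs X -> X t -> proper_filter X) ->
  (exists X t, Fs X /\ X t) ->
  proper_filter (fun t => exists2 X, Fs X & X t).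
Proof.
intros chain Fs_filter [X0 [t0 [FX0 Xt0]]]; split; [|split; [|split]].
- exists X0; [exact FX0|]. apply (Fs_filter X0 t0 FX0 Xt0).
- intros x y [X FX Xx] [Y FY Yy].
  destruct (chain X Y FX FY) as [XY|YX].
  + exists Y; [exact FY|]. apply (Fs_filter Y y FY Yy); auto.
  + exists X; [exact FX|]. apply (Fs_filter X x FX Xx); auto.
- intros x y [X FX Xx] Hxy. exists X; [exact FX|].
  apply (Fs_filter X x FX Xx) with x; assumption.
- intros [X FX Xz]. exact (proj2 (proj2 (proj2 (Fs_filter X azero FX Xz))) Xz).
Qed.

Lemma ultrafilter_exists (c : B) : c <> azero ->
  exists U, proper_filter U /\ U c /\ forall a, U a \/ U (acompl a).
Proof.
intro Hc.
(* The empty set satisfies [P], which makes [P] closed under unions of all chains,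
   including the empty one. *)
pose (P := fun F : B -> Prop => (exists t, F t) -> proper_filter F /\ F c).
destruct (@classical_sets.Zorn_bigcup B P) as [A [PA Amax]].
- intros Fs FsP chain [t [X FX Xt]].
  assert (FsP' : forall X t, Fs X -> X t -> proper_filter X /\ X c)
    by (intros Y y FY Yy; apply (FsP Y FY); exists y; exact Yy).
  split.
  + apply chain_union_proper_filter; [exact chain| |exists X, t; auto].
    exact (fun Y y FY Yy => proj1 (FsP' Y y FY Yy)).
  + exists X; [exact FX|]. exact (proj2 (FsP' X t FX Xt)).
- assert (maximal : forall G, P G -> (forall t, A t -> G t) -> forall t, G t -> A t).
  { intros G PG AG t Gt. apply NNPP; intro At.
    apply (Amax G); [|exact PG]. split; [exact AG|]. intro GA; exact (At (GA t Gt)). }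
  assert (Ane : exists t, A t).
  { apply NNPP; intro Ae. apply Ae; exists c.
    apply (maximal (ba_le c)); [| |apply meetxx].
    - intros _; split; [apply principal_proper_filter; exact Hc|apply meetxx].
    - intros t At; exfalso; exact (Ae (ex_intro _ t At)). }
  destruct (PA Ane) as [AF Ac].
  exists A; split; [exact AF|split; [exact Ac|]].
  intro a; destruct (classic (A a)) as [Aa|Aa]; [left; exact Aa|right].
  pose proof (@proper_filter_extend_compl A a AF Aa) as GF.
  apply (maximal (fun x => exists2 f, A f & ba_le (ameet f (acompl a)) x)).
  + intros _; split; [exact GF|]. exists c; [exact Ac|]. apply le_meetl.
  + intros t At. exists t; [exact At|]. apply le_meetl.
  + exists aone; [exact (proj1 AF)|]. apply le_meetr.
Qed.

Definition indicator (U : B -> Prop) (x : B) : bool :=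
  if excluded_middle_informative (U x) then true else false.

Lemma indicator_true (U : B -> Prop) x : U x -> indicator U x = true.
Proof. unfold indicator; destruct (excluded_middle_informative (U x)); tauto. Qed.

Lemma indicator_false (U : B -> Prop) x : ~ U x -> indicator U x = false.
Proof. unfold indicator; destruct (excluded_middle_informative (U x)); tauto. Qed.

Lemma ultrafilter_two_valued (U : B -> Prop) :
  proper_filter U -> (forall a, U a \/ U (acompl a)) -> two_valued (indicator U).
Proof.
intros [U1 [Umeet [Uup U0]]] Uult.
assert (Ucompl : forall a, ~ U a <-> U (acompl a)).
{ intro a; split; [destruct (Uult a); tauto|].
  intros Uc Ua. apply U0. rewrite <- (meet_compl a). apply Umeet; assumption. }
split; [|split; [|split; [|split]]].
- intros a b. destruct (classic (U (ameet a b))) as [Hab|Hab].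
  + rewrite (indicator_true _ _ Hab), !indicator_true; [reflexivity| |];
      apply Uup with (ameet a b); auto using le_meetl, le_meetr.
  + rewrite (indicator_false _ _ Hab).
    destruct (classic (U a)) as [Ha|Ha]; [destruct (classic (U b)) as [Hb|Hb]|].
    * exfalso; apply Hab, Umeet; assumption.
    * rewrite (indicator_false _ _ Hb), Bool.andb_false_r; reflexivity.
    * rewrite (indicator_false _ _ Ha); reflexivity.
- intros a b. destruct (classic (U (ajoin a b))) as [Hab|Hab].
  + rewrite (indicator_true _ _ Hab).
    destruct (classic (U a)) as [Ha|Ha]; [rewrite (indicator_true _ _ Ha); reflexivity|].
    destruct (classic (U b)) as [Hb|Hb].
    { rewrite (indicator_true _ _ Hb), Bool.orb_true_r; reflexivity. }
    exfalso; apply U0. rewrite <- (meet_join_compl_meet a b).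
    apply Umeet; [exact Hab|apply Umeet; apply Ucompl; assumption].
  + rewrite (indicator_false _ _ Hab), !indicator_false; [reflexivity| |];
      intro H; apply Hab, (Uup _ _ H); unfold ba_le;
      first [apply meetK|rewrite joinC; apply meetK].
- intro a. destruct (classic (U a)) as [Ha|Ha].
  + rewrite (indicator_true _ _ Ha), indicator_false; [reflexivity|].
    intro Hc; apply (proj2 (Ucompl a) Hc Ha).
  + rewrite (indicator_false _ _ Ha), indicator_true; [reflexivity|]. apply Ucompl, Ha.
- apply indicator_false; exact U0.
- apply indicator_true; exact U1.
Qed.

Lemma two_valued_separate (x y : B) : ameet x (acompl y) <> azero ->
  exists phi, two_valued phi /\ phi x = true /\ phi y = false.
Proof.
intro Hxy. destruct (@ultrafilter_exists _ Hxy) as [U [UF [Uxy Uult]]].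
pose proof (ultrafilter_two_valued UF Uult) as Hphi.
exists (indicator U); split; [exact Hphi|].
destruct Hphi as [Pmeet [_ [Pcompl _]]].
pose proof (indicator_true _ _ Uxy) as E. rewrite Pmeet, Pcompl in E.
destruct (indicator U x), (indicator U y); simpl in E; try discriminate; auto.
Qed.

Lemma two_valued_ext (x y : B) : (forall phi, two_valued phi -> phi x = phi y) -> x = y.
Proof.
intros Hphi. apply NNPP; intro Hxy.
destruct (classic (ameet x (acompl y) = azero)) as [Exy|Exy];
  [destruct (classic (ameet y (acompl x) = azero)) as [Eyx|Eyx]|].
- apply Hxy. apply le_of_meet_compl in Exy, Eyx. unfold ba_le in Exy, Eyx.
  transitivity (ameet x y); [symmetry; exact Exy|]. rewrite meetC; exact Eyx.
- destruct (@two_valued_separate y x Eyx) as [phi [Hp [Py Px]]].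
  pose proof (Hphi phi Hp); congruence.
- destruct (@two_valued_separate x y Exy) as [phi [Hp [Px Py]]].
  pose proof (Hphi phi Hp); congruence.
Qed.

End BooleanAlgebra.

(* Equations of a Boolean algebra, possibly under equational hypotheses, are decided
   in the two-element algebra, since two-valued homomorphisms separate points. *)
Ltac two_valued_check HB :=
  apply (two_valued_ext HB);
  let phi := fresh "phi" in
  let Pm := fresh "Pm" in let Pj := fresh "Pj" in let Pc := fresh "Pc" in
  let P0 := fresh "P0" in let P1 := fresh "P1" in
  intros phi [Pm [Pj [Pc [P0 P1]]]]; simpl in *;
  repeat match goal with H : @eq (acar _) _ _ |- _ => apply (f_equal phi) in H end;
  repeat progress (rewrite ?Pm, ?Pj, ?Pc, ?P0, ?P1 in *);
  repeat match goal with
         | |- context [phi ?a] => destruct (phi a)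
         | H : context [phi ?a] |- _ => destruct (phi a)
         end;
  simpl in *; congruence.

(* Likewise, equations of a Bochvar algebra are checked coordinatewise in WK^e
   through an embedding [h] into a power of WK^e. *)
Ltac wk_coordinatewise h hinj hh :=
  lazymatch type of h with
  | bcar ?A -> _ =>
    let Hm := fresh "Hm" in let Hj := fresh "Hj" in let Hn := fresh "Hn" in
    let HJ := fresh "HJ" in let H0 := fresh "H0" in let H1 := fresh "H1" in
    pose proof hh as [Hm [Hj [Hn [HJ [H0 H1]]]]];
    apply hinj; apply functional_extensionality;
    let x := fresh "x" in intro x;
    repeat match goal with
           H : @eq (bcar A) _ _ |- _ => apply (f_equal (fun a => h a x)) in H end;
    repeat match goal with H : forall y : _, _ |- _ => specialize (H x) end;
    repeat progress (rewrite ?Hm, ?Hj, ?Hn, ?HJ, ?H0, ?H1 in *); simpl in *;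
    repeat match goal with
           | |- context [h ?a x] => destruct (h a x)
           | H : context [h ?a x] |- _ => destruct (h a x)
           end;
    simpl in *; congruence
  end.

Definition wk_embedding (A : bsig) (X : Type) (h : A -> WKpow X) : Prop :=
  (forall a b, h a = h b -> a = b) /\ bhom h.
Arguments wk_embedding {A X} h.

Lemma wk_embedding_fibre_top (A : bsig) (X : Type) (h : A -> WKpow X) (c : A)
  (E : wk_embedding h) : fibre_top c <-> forall x, h c x <> t0.
Proof.
destruct E as [hinj hh]; split.
- intros Hc x Hx.
  assert (Hs : same_fibre (bjoin c (bneg c)) c)
    by (split; clear Hc Hx; wk_coordinatewise h hinj hh).
  pose proof (Hc _ Hs) as E. apply (f_equal (fun a => h a x)) in E.
  destruct hh as [Hm [Hj [Hn _]]]. rewrite Hm, Hj, Hn in E. simpl in E.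
  rewrite Hx in E. discriminate.
- intros Hc b [E1 E2]. wk_coordinatewise h hinj hh.
Qed.

Section BochvarAlgebra.
Variables (A : bsig) (HA : is_bochvar A).

Lemma fibre_top_join_neg (a : A) : fibre_top (bjoin a (bneg a)).
Proof.
destruct HA as [X [h E]]. apply (wk_embedding_fibre_top _ E). intro x.
destruct E as [_ [_ [Hj [Hn _]]]]. rewrite Hj, Hn. simpl. destruct (h a x); simpl; congruence.
Qed.

Lemma fibre_topE (c : A) : fibre_top c <-> c = bjoin c (bneg c).
Proof.
destruct HA as [X [h E]]. rewrite (wk_embedding_fibre_top _ E). split.
- intro Hc. destruct E as [hinj hh]. wk_coordinatewise h hinj hh.
- intros Hc x. destruct E as [_ [_ [Hj [Hn _]]]].
  apply (f_equal (fun a => h a x)) in Hc. rewrite Hj, Hn in Hc. simpl in Hc.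
  destruct (h c x); simpl in *; congruence.
Qed.

Lemma fibre_top_one : fibre_top (bone : A).
Proof.
destruct HA as [X [h E]]. apply (wk_embedding_fibre_top _ E). intro x.
destruct E as [_ [_ [_ [_ [_ [_ H1]]]]]]. rewrite H1. simpl. congruence.
Qed.

Lemma fibre_top_meet (c d : A) : fibre_top c -> fibre_top d -> fibre_top (bmeet c d).
Proof.
destruct HA as [X [h E]]. rewrite !(wk_embedding_fibre_top _ E). intros Hc Hd x.
specialize (Hc x); specialize (Hd x).
destruct E as [_ [Hm _]]. rewrite Hm. simpl. destruct (h c x), (h d x); simpl; congruence.
Qed.

Lemma J2_in_bottom (a : A) : in_bottom (bJ2 a).
Proof.
destruct HA as [X [h [hinj hh]]]. apply (emb_bottom hinj hh). intro x.
destruct hh as [_ [_ [_ [HJ _]]]]. rewrite HJ. simpl. destruct (h a x); simpl; congruence.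
Qed.

End BochvarAlgebra.

Lemma bhom_fibre_top (A1 A2 : bsig) (HA1 : is_bochvar A1) (HA2 : is_bochvar A2)
  (f : A1 -> A2) (c : A1) : bhom f -> fibre_top c -> fibre_top (f c).
Proof.
intros [_ [Hj [Hn _]]] Hc. apply (fibre_topE HA2). apply (fibre_topE HA1) in Hc.
rewrite <- Hn, <- Hj, <- Hc. reflexivity.
Qed.

Lemma Gcar_eq (A : bsig) (a b : Gcar A) : proj1_sig a = proj1_sig b -> a = b.
Proof.
destruct a as [a Ha], b as [b Hb]; simpl; intro E; subst; f_equal; apply proof_irrelevance.
Qed.

Lemma Gamma_is_boolean (A : bsig) (HA : is_bochvar A) : is_boolean (Gamma A HA).
Proof.
pose proof HA as [X [h [hinj hh]]].
split; simpl; intros;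
  apply Gcar_eq; simpl;
  repeat match goal with |- context [proj1_sig ?a] =>
    is_var a; let a' := fresh "a" in let Ha := fresh "Ha" in
    destruct a as [a' Ha]; simpl;
    pose proof (proj1 (emb_bottom hinj hh _) Ha); clear Ha end;
  wk_coordinatewise h hinj hh.
Qed.

Lemma Gamma_is_system (A : bsig) (HA : is_bochvar A) : is_system (Gamma A HA).
Proof.
split; [apply Gamma_is_boolean| |].
- exists bone; split; [apply (fibre_top_one HA)|].
  simpl. destruct HA as [X [h [hinj hh]]]. wk_coordinatewise h hinj hh.
- intros i j [c [Hc Ei]] [d [Hd Ej]]. exists (bmeet c d).
  split; [apply (fibre_top_meet HA); assumption|].
  simpl. rewrite Ei, Ej. destruct HA as [X [h [hinj hh]]]. wk_coordinatewise h hinj hh.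
Qed.

Lemma GammaMor_sys_hom (A1 : bsig) (HA1 : is_bochvar A1) (A2 : bsig) (HA2 : is_bochvar A2)
  (f : A1 -> A2) (Hf : bhom f) : sys_hom (GammaMor HA1 HA2 Hf).
Proof.
pose proof Hf as [Hm [Hj [Hn [HJ [H0 H1]]]]].
split; [split; [|split; [|split; [|split]]]|];
  [intros; apply Gcar_eq; simpl; auto ..|].
intros k [c [Hc Ek]]. exists (f c). split.
- exact (bhom_fibre_top HA1 HA2 Hf Hc).
- simpl. rewrite Ek. apply HJ.
Qed.

Lemma GammaMor_id (A : bsig) (HA : is_bochvar A) (Hid : bhom (fun a : A => a)) (x : Gamma A HA) :
  GammaMor HA HA Hid x = x.
Proof. apply Gcar_eq. reflexivity. Qed.

Lemma GammaMor_comp (A1 : bsig) (HA1 : is_bochvar A1) (A2 : bsig) (HA2 : is_bochvar A2)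
  (A3 : bsig) (HA3 : is_bochvar A3) (f : A1 -> A2) (g : A2 -> A3)
  (Hf : bhom f) (Hg : bhom g) (Hgf : bhom (fun a => g (f a))) (x : Gamma A1 HA1) :
  GammaMor HA1 HA3 Hgf x = GammaMor HA2 HA3 Hg (GammaMor HA1 HA2 Hf x).
Proof. apply Gcar_eq. reflexivity. Qed.

Ltac unfold_Xi := repeat progress (unfold XiMor, Xmk, Xidx, Xval in *; simpl in *).

Lemma Xcar_eq (S : bsys) (p q : Xcar S) : Xidx p = Xidx q -> Xval p = Xval q -> p = q.
Proof.
destruct p as [[i a] Hp], q as [[j b] Hq]; unfold Xidx, Xval; simpl; intros E1 E2; subst.
f_equal; apply proof_irrelevance.
Qed.

Lemma Xval_le_idx (S : bsys) (p : Xcar S) : ameet (Xval p) (Xidx p) = Xval p.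
Proof. exact (proj2 (proj2_sig p)). Qed.

Definition two_valued_point (S : bsys) : Type := {phi : S -> bool | two_valued phi}.

Definition Xi_to_WKpow (S : bsys) (HS : is_system S) (p : Xi S HS) :
  WKpow (two_valued_point S) :=
  fun phi => if proj1_sig phi (Xidx p) then (if proj1_sig phi (Xval p) then t1 else t0) else th.

Lemma Xi_to_WKpow_inj (S : bsys) (HS : is_system S) (p q : Xi S HS) :
  Xi_to_WKpow p = Xi_to_WKpow q -> p = q.
Proof.
intro E.
assert (E_at : forall phi (Hphi : two_valued phi),
  (if phi (Xidx p) then (if phi (Xval p) then t1 else t0) else th) =
  (if phi (Xidx q) then (if phi (Xval q) then t1 else t0) else th))
  by (intros phi Hphi; exact (f_equal (fun f => f (exist _ phi Hphi)) E)).
assert (Eidx : Xidx p = Xidx q).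
{ apply (two_valued_ext (sys_bool HS)). intros phi Hphi. specialize (E_at phi Hphi).
  destruct (phi (Xidx p)), (phi (Xidx q)), (phi (Xval p)), (phi (Xval q)); congruence. }
apply Xcar_eq; [exact Eidx|].
pose proof (Xval_le_idx p) as Ip. pose proof (Xval_le_idx q) as Iq.
rewrite Eidx in Ip.
apply (two_valued_ext (sys_bool HS)). intros phi Hphi. specialize (E_at phi Hphi).
destruct Hphi as [Pm _]. apply (f_equal phi) in Ip, Iq. rewrite Pm in Ip, Iq.
rewrite Eidx in E_at.
destruct (phi (Xidx q)), (phi (Xval p)), (phi (Xval q)); simpl in *; congruence.
Qed.

Lemma Xi_is_bochvar (S : bsys) (HS : is_system S) : is_bochvar (Xi S HS).
Proof.
exists (two_valued_point S), (@Xi_to_WKpow S HS). split; [apply Xi_to_WKpow_inj|].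
split; [|split; [|split; [|split; [|split]]]]; intros;
  apply functional_extensionality; intros [phi [Pm [Pj [Pc [P0 P1]]]]];
  unfold Xi_to_WKpow; simpl; unfold Xidx, Xval; simpl; rewrite ?Pm, ?Pj, ?Pc, ?P0, ?P1;
  repeat match goal with |- context [phi ?a] => destruct (phi a) end; reflexivity.
Qed.

Lemma XiMor_bhom (S1 : bsys) (HS1 : is_system S1) (S2 : bsys) (HS2 : is_system S2)
  (g : S1 -> S2) (Hg : sys_hom g) : bhom (XiMor HS1 HS2 Hg).
Proof.
pose proof Hg as [[Gm [Gj [Gc [G0 G1]]]] _].
split; [|split; [|split; [|split; [|split]]]]; intros;
  apply Xcar_eq; unfold_Xi; rewrite ?Gm, ?Gj, ?Gc, ?G0, ?G1; two_valued_check (sys_bool HS2).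
Qed.

Lemma XiMor_id (S : bsys) (HS : is_system S) (Hid : sys_hom (fun a : S => a)) (x : Xi S HS) :
  XiMor HS HS Hid x = x.
Proof. apply Xcar_eq; [reflexivity|]. apply Xval_le_idx. Qed.

Lemma XiMor_comp (S1 : bsys) (HS1 : is_system S1) (S2 : bsys) (HS2 : is_system S2)
  (S3 : bsys) (HS3 : is_system S3) (f : S1 -> S2) (g : S2 -> S3)
  (Hf : sys_hom f) (Hg : sys_hom g) (Hgf : sys_hom (fun a => g (f a))) (x : Xi S1 HS1) :
  XiMor HS1 HS3 Hgf x = XiMor HS2 HS3 Hg (XiMor HS1 HS2 Hf x).
Proof.
pose proof Hg as [[Gm _] _]. apply Xcar_eq; unfold_Xi; [reflexivity|].
rewrite Gm. two_valued_check (sys_bool HS3).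
Qed.

Lemma bhom_inverse (A B : bsig) (e : A -> B) (i : B -> A) (He : bhom e)
  (ie : forall a, i (e a) = a) (ei : forall b, e (i b) = b) : bhom i.
Proof.
destruct He as [Hm [Hj [Hn [HJ [H0 H1]]]]].
split; [|split; [|split; [|split; [|split]]]]; intros.
- rewrite <- (ei a), <- (ei b), <- Hm, !ie. reflexivity.
- rewrite <- (ei a), <- (ei b), <- Hj, !ie. reflexivity.
- rewrite <- (ei a), <- Hn, !ie. reflexivity.
- rewrite <- (ei a), <- HJ, !ie. reflexivity.
- rewrite <- H0, ie. reflexivity.
- rewrite <- H1, ie. reflexivity.
Qed.

Section Unit.
Variables (A : bsig) (HA : is_bochvar A).

Definition fibre_index (a : A) : Gamma A HA :=
  exist _ (bJ2 (bjoin a (bneg a))) (J2_in_bottom HA _).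

Lemma fibre_index_in_I (a : A) : sI (Gamma A HA) (fibre_index a).
Proof. exists (bjoin a (bneg a)). split; [apply (fibre_top_join_neg HA)|reflexivity]. Qed.

Definition eta (a : A) : Xi (Gamma A HA) (Gamma_is_system HA) :=
  Xmk (Gamma_is_system HA) (fibre_index a) (fibre_index_in_I a)
    (exist _ (bJ2 a) (J2_in_bottom HA a)).

Definition index_top (p : Xi (Gamma A HA) (Gamma_is_system HA)) : A :=
  proj1_sig (constructive_indefinite_description
    (fun c : A => fibre_top c /\ proj1_sig (Xidx p) = bJ2 c) (XidxI p)).

Lemma index_top_spec (p : Xi (Gamma A HA) (Gamma_is_system HA)) :
  fibre_top (index_top p) /\ proj1_sig (Xidx p) = bJ2 (index_top p).
Proof. unfold index_top. destruct constructive_indefinite_description as [c Hc]. exact Hc. Qed.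

Definition eta_inv (p : Xi (Gamma A HA) (Gamma_is_system HA)) : A :=
  bmeet (proj1_sig (Xval p)) (index_top p).

Lemma eta_bhom : bhom eta.
Proof.
split; [|split; [|split; [|split; [|split]]]]; intros;
  apply Xcar_eq; apply Gcar_eq; unfold eta, fibre_index; unfold_Xi;
  destruct HA as [X [h [hinj hh]]]; wk_coordinatewise h hinj hh.
Qed.

Lemma etaK (a : A) : eta_inv (eta a) = a.
Proof.
unfold eta_inv. destruct (index_top_spec (eta a)) as [Hc Ec].
set (c := index_top (eta a)) in *. clearbody c.
unfold eta, fibre_index in *; unfold_Xi.
destruct HA as [X [h E]]. pose proof (proj1 (wk_embedding_fibre_top c E) Hc).
destruct E as [hinj hh]. wk_coordinatewise h hinj hh.
Qed.

Lemma eta_invK (p : Xi (Gamma A HA) (Gamma_is_system HA)) : eta (eta_inv p) = p.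
Proof.
unfold eta_inv. destruct (index_top_spec p) as [Hc Ec].
set (c := index_top p) in *. clearbody c.
pose proof (Xval_le_idx p) as Ip. apply (f_equal (@proj1_sig _ _)) in Ip.
pose proof HA as [X [h E]].
pose proof (proj1 (wk_embedding_fibre_top c E) Hc).
pose proof (proj1 (emb_bottom (proj1 E) (proj2 E) _) (proj2_sig (Xval p))).
destruct E as [hinj hh].
apply Xcar_eq; apply Gcar_eq; unfold eta, fibre_index; unfold_Xi; rewrite Ec in *;
  wk_coordinatewise h hinj hh.
Qed.

Lemma eta_inv_bhom : bhom eta_inv.
Proof. exact (bhom_inverse eta_inv eta_bhom etaK eta_invK). Qed.

End Unit.

Lemma eta_natural (A1 : bsig) (HA1 : is_bochvar A1) (A2 : bsig) (HA2 : is_bochvar A2)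
  (f : A1 -> A2) (Hf : bhom f) (a : A1) :
  eta HA2 (f a)
  = XiMor (Gamma_is_system HA1) (Gamma_is_system HA2) (GammaMor_sys_hom HA1 HA2 Hf) (eta HA1 a).
Proof.
pose proof Hf as [Fm [Fj [Fn [FJ _]]]].
apply Xcar_eq; apply Gcar_eq; unfold eta, fibre_index, GammaMor; unfold_Xi;
  repeat progress rewrite ?Fm, ?Fj, ?Fn, ?FJ;
  destruct HA2 as [X [h [hinj hh]]]; wk_coordinatewise h hinj hh.
Qed.

Section Counit.
Variables (S : bsys) (HS : is_system S).

Definition eps (p : Gamma (Xi S HS) (Xi_is_bochvar HS)) : S := Xval (proj1_sig p).

Lemma in_bottom_Xidx (p : Xi S HS) : in_bottom p -> Xidx p = aone.
Proof.
intros [_ E]. apply (f_equal (@Xidx S)) in E. unfold_Xi. two_valued_check (sys_bool HS).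
Qed.

Lemma in_bottom_Xmk_one (y : S) : @in_bottom (Xi S HS) (Xmk HS aone (sys_I1 HS) y).
Proof. split; apply Xcar_eq; unfold_Xi; two_valued_check (sys_bool HS). Qed.

Definition eps_inv (y : S) : Gamma (Xi S HS) (Xi_is_bochvar HS) :=
  exist _ (Xmk HS aone (sys_I1 HS) y) (in_bottom_Xmk_one y).

Lemma eps_sys_hom : sys_hom eps.
Proof.
split; [split; [|split; [|split; [|split]]]|].
- intros [p Hp] [q Hq]. pose proof (in_bottom_Xidx Hp). pose proof (in_bottom_Xidx Hq).
  unfold eps; unfold_Xi. two_valued_check (sys_bool HS).
- intros [p Hp] [q Hq]. pose proof (in_bottom_Xidx Hp). pose proof (in_bottom_Xidx Hq).
  unfold eps; unfold_Xi. two_valued_check (sys_bool HS).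
- intros [p Hp]. pose proof (in_bottom_Xidx Hp).
  unfold eps; unfold_Xi. two_valued_check (sys_bool HS).
- unfold eps; unfold_Xi. two_valued_check (sys_bool HS).
- unfold eps; unfold_Xi. two_valued_check (sys_bool HS).
- intros k [c [Hc Ek]]. unfold eps. rewrite Ek.
  (* As the top of its fibre, c lies above i/[i) for its index i (this is [E]),
     whence J2 c = i/[1). *)
  pose (b := Xmk HS (Xidx c) (XidxI c) (Xidx c) : Xi S HS).
  pose proof (Xval_le_idx c) as Ic. pose proof (XidxI c) as Ik.
  assert (Hs : same_fibre b c)
    by (split; apply Xcar_eq; unfold b; unfold_Xi; two_valued_check (sys_bool HS)).
  pose proof (Hc b Hs) as E. apply (f_equal (@Xval S)) in E. unfold b in E.
  assert (E' : Xval (bJ2 c : Xi S HS) = Xidx c) by (unfold_Xi; two_valued_check (sys_bool HS)).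
  rewrite E'. exact Ik.
Qed.

Lemma eps_inv_sys_hom : sys_hom eps_inv.
Proof.
split; [split; [|split; [|split; [|split]]]|];
  [intros; apply Gcar_eq; apply Xcar_eq; unfold_Xi; two_valued_check (sys_bool HS) ..|].
intros i Hi. exists (Xmk HS i Hi i). split.
- intros b [E1 E2]. pose proof (Xval_le_idx b) as Ib.
  apply (f_equal (@Xidx S)) in E1, E2. unfold_Xi.
  apply Xcar_eq; unfold_Xi; two_valued_check (sys_bool HS).
- apply Xcar_eq; unfold_Xi; two_valued_check (sys_bool HS).
Qed.

Lemma epsK (x : Gamma (Xi S HS) (Xi_is_bochvar HS)) : eps_inv (eps x) = x.
Proof.
destruct x as [p Hp]. apply Gcar_eq. simpl. pose proof (in_bottom_Xidx Hp) as E.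
pose proof (Xval_le_idx p) as Ip.
apply Xcar_eq; unfold eps; unfold_Xi; [rewrite E; reflexivity|]. two_valued_check (sys_bool HS).
Qed.

Lemma eps_invK (y : S) : eps (eps_inv y) = y.
Proof. unfold eps; unfold_Xi. two_valued_check (sys_bool HS). Qed.

End Counit.

Lemma eps_natural (S1 : bsys) (HS1 : is_system S1) (S2 : bsys) (HS2 : is_system S2)
  (g : S1 -> S2) (Hg : sys_hom g) (x : Gamma (Xi S1 HS1) (Xi_is_bochvar HS1)) :
  g (eps x) = eps (GammaMor (Xi_is_bochvar HS1) (Xi_is_bochvar HS2) (XiMor_bhom HS1 HS2 Hg) x).
Proof.
destruct x as [p Hp]. pose proof (in_bottom_Xidx Hp) as E.
unfold eps; unfold_Xi. rewrite E.
destruct Hg as [[_ [_ [_ [_ G1]]]] _]. rewrite G1. two_valued_check (sys_bool HS2).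
Qed.

Theorem theorem3p9 :
  exists (HG : forall (A : bsig) (HA : is_bochvar A), is_system (Gamma A HA))
         (HX : forall (S : bsys) (HS : is_system S), is_bochvar (Xi S HS))
         (HGm : forall (A1 : bsig) (HA1 : is_bochvar A1)
                       (A2 : bsig) (HA2 : is_bochvar A2)
                       (f : A1 -> A2) (Hf : bhom f),
                  sys_hom (GammaMor HA1 HA2 Hf))
         (HXm : forall (S1 : bsys) (HS1 : is_system S1)
                       (S2 : bsys) (HS2 : is_system S2)
                       (g : S1 -> S2) (Hg : sys_hom g),
                  bhom (XiMor HS1 HS2 Hg)),
    (* Gamma is a functor *)
    (forall (A : bsig) (HA : is_bochvar A) (Hid : bhom (fun a : A => a))
            (x : Gamma A HA),
        GammaMor HA HA Hid x = x) /\
    (forall (A1 : bsig) (HA1 : is_bochvar A1) (A2 : bsig) (HA2 : is_bochvar A2)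
            (A3 : bsig) (HA3 : is_bochvar A3)
            (f : A1 -> A2) (g : A2 -> A3) (Hf : bhom f) (Hg : bhom g)
            (Hgf : bhom (fun a => g (f a))) (x : Gamma A1 HA1),
        GammaMor HA1 HA3 Hgf x = GammaMor HA2 HA3 Hg (GammaMor HA1 HA2 Hf x)) /\
    (* Xi is a functor *)
    (forall (S : bsys) (HS : is_system S) (Hid : sys_hom (fun a : S => a))
            (x : Xi S HS),
        XiMor HS HS Hid x = x) /\
    (forall (S1 : bsys) (HS1 : is_system S1) (S2 : bsys) (HS2 : is_system S2)
            (S3 : bsys) (HS3 : is_system S3)
            (f : S1 -> S2) (g : S2 -> S3) (Hf : sys_hom f) (Hg : sys_hom g)
            (Hgf : sys_hom (fun a => g (f a))) (x : Xi S1 HS1),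
        XiMor HS1 HS3 Hgf x = XiMor HS2 HS3 Hg (XiMor HS1 HS2 Hf x)) /\
    (* natural isomorphism  Id_B  ~=  Xi o Gamma *)
    (exists eta : forall (A : bsig) (HA : is_bochvar A),
                    A -> Xi (Gamma A HA) (HG A HA),
       (forall (A : bsig) (HA : is_bochvar A),
          bhom (eta A HA) /\
          exists inv : Xi (Gamma A HA) (HG A HA) -> A,
            bhom inv /\ (forall a, inv (eta A HA a) = a) /\
            (forall y, eta A HA (inv y) = y)) /\
       (forall (A1 : bsig) (HA1 : is_bochvar A1) (A2 : bsig) (HA2 : is_bochvar A2)
               (f : A1 -> A2) (Hf : bhom f) (a : A1),
          eta A2 HA2 (f a)
          = XiMor (HG A1 HA1) (HG A2 HA2) (HGm A1 HA1 A2 HA2 f Hf) (eta A1 HA1 a))) /\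
    (* natural isomorphism  Gamma o Xi  ~=  Id_S *)
    (exists eps : forall (S : bsys) (HS : is_system S),
                    Gamma (Xi S HS) (HX S HS) -> S,
       (forall (S : bsys) (HS : is_system S),
          sys_hom (eps S HS) /\
          exists inv : S -> Gamma (Xi S HS) (HX S HS),
            sys_hom inv /\ (forall x, inv (eps S HS x) = x) /\
            (forall y, eps S HS (inv y) = y)) /\
       (forall (S1 : bsys) (HS1 : is_system S1) (S2 : bsys) (HS2 : is_system S2)
               (g : S1 -> S2) (Hg : sys_hom g) (x : Gamma (Xi S1 HS1) (HX S1 HS1)),
          g (eps S1 HS1 x)
          = eps S2 HS2 (GammaMor (HX S1 HS1) (HX S2 HS2) (HXm S1 HS1 S2 HS2 g Hg) x))).
Proof.
exists (@Gamma_is_system), (@Xi_is_bochvar), (@GammaMor_sys_hom), (@XiMor_bhom).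
split; [exact GammaMor_id|split; [exact GammaMor_comp|]].
split; [exact XiMor_id|split; [exact XiMor_comp|]].
split.
- exists (@eta); split.
  + intros A HA. split; [apply eta_bhom|].
    exists (@eta_inv A HA).
    split; [apply eta_inv_bhom|split; [apply etaK|apply eta_invK]].
  + exact eta_natural.
- exists (@eps); split.
  + intros S HS. split; [apply eps_sys_hom|].
    exists (@eps_inv S HS).
    split; [apply eps_inv_sys_hom|split; [apply epsK|apply eps_invK]].
  + exact eps_natural.
Qed.
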